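(* Let $A$ be a unital $C^*$-algebra, let $P\in M_M(A)$ be a submagic matrix, let $K\ge0$ and $N=M+K$. If $P$ can be completed to a magic matrix $\widetilde P\in M_N(A)$ (i.e. one whose upper-left $M\times M$ block is $P$), then $\sum_{i,j=1}^M P_{ij}\ge (M-K)1$.
   Context: A submagic matrix over $A$ is a square matrix whose entries are orthogonal projections, pairwise orthogonal within each row and within each column; it is magic if moreover the entries in each row and each column sum to $1$. The inequality is in the order of self-adjoint elements of $A$. *)

From HB Require Import structures.
From mathcomp Require Import all_boot all_order all_algebra.
From mathcomp Require Import reals.
From mathcomp.real_closed Require Import complex.
Set Implicit Arguments. Unset Strict Implicit. Unset Printing Implicit Defensive.
Import Order.TTheory GRing.Theory Num.Theory.
Local Open Scope ring_scope.

Definition unital_cstar_algebra (R : realType) (A : unitAlgType R[i])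
    (star : A -> A) (nrm : A -> R) : Prop :=
  [/\
      [/\ (forall a, star (star a) = a),
          (forall a b, star (a + b) = star a + star b),
          (forall (c : R[i]) a, star (c *: a) = Num.conj c *: star a) &
          (forall a b, star (a * b) = star b * star a)],
      [/\ (forall a, 0 <= nrm a),
          (forall a, nrm a = 0 -> a = 0),
          (forall a b, nrm (a + b) <= nrm a + nrm b),
          (forall (c : R[i]) a, (nrm (c *: a))%:C%C = `|c| * (nrm a)%:C%C) &
          (forall a b, nrm (a * b) <= nrm a * nrm b)],
      (forall a, nrm (star a * a) = nrm a ^+ 2) &
      (forall u : nat -> A,
         (forall e : R, 0 < e -> exists N : nat, forall m n : nat,
            (N <= m)%N -> (N <= n)%N -> nrm (u m - u n) < e) ->
         exists l : A, forall e : R, 0 < e -> exists N : nat, forall n : nat,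
            (N <= n)%N -> nrm (u n - l) < e)].

Definition spectrum (R : realType) (A : unitAlgType R[i]) (a : A) : pred R[i] :=
  fun l => ~~ (a - l%:A \is a GRing.unit).

Definition cstar_pos (R : realType) (A : unitAlgType R[i]) (star : A -> A)
    (a : A) : Prop :=
  star a = a /\ forall l : R[i], l \in spectrum a -> (l \is Num.real) && (0 <= l).

Definition cstar_le (R : realType) (A : unitAlgType R[i]) (star : A -> A)
    (a b : A) : Prop :=
  [/\ star a = a, star b = b & cstar_pos star (b - a)].

Definition is_projection (R : realType) (A : unitAlgType R[i]) (star : A -> A)
    (p : A) : Prop :=
  p * p = p /\ star p = p.

Definition submagic (R : realType) (A : unitAlgType R[i]) (star : A -> A)
    (n : nat) (P : 'M[A]_n) : Prop :=
  [/\ forall i j, is_projection star (P i j),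
      forall i j k, j != k -> P i j * P i k = 0 &
      forall i k j, i != k -> P i j * P k j = 0].

Definition magic (R : realType) (A : unitAlgType R[i]) (star : A -> A)
    (n : nat) (P : 'M[A]_n) : Prop :=
  [/\ submagic star P,
      forall i, \sum_j P i j = 1 &
      forall j, \sum_i P i j = 1].

From HB Require Import structures.
From mathcomp Require Import all_boot all_order all_algebra.
From mathcomp Require Import reals.
From mathcomp.real_closed Require Import complex.
From mathcomp Require Import ring lra.

Set Implicit Arguments.
Unset Strict Implicit.
Unset Printing Implicit Defensive.
Import Order.TTheory GRing.Theory Num.Theory.
Local Open Scope ring_scope.

(* Summing the first M columns and the last K rows of the magic completion
   shows that the sum S of the entries of P is (M - K) 1 + D, where D is the
   sum of the K^2 projections p of the lower-right block.  Each 1 - p is again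
   a projection, so ||n 1 - D|| <= n for n = K^2.  A self-adjoint h with
   ||n 1 - h|| <= n is positive: its spectrum is real, and for real l < 0 the
   element h - l 1 = -((n 1 - h) - (n - l) 1) is invertible by a Neumann
   series, because ||n 1 - h|| < n - l. *)

Lemma exprn_lt (R : archiRealFieldType) (r e : R) :
  0 <= r -> r < 1 -> 0 < e -> exists N : nat, r ^+ N < e.
Proof.
move=> r_ge0 r_lt1 e_gt0.
have [->|r_neq0] := eqVneq r 0; first by exists 1%N; rewrite expr1.
have r_gt0 : 0 < r by rewrite lt_def r_neq0.
set d := r^-1 - 1.
have d_gt0 : 0 < d by rewrite /d subr_gt0 invf_gt1.
have bernoulli n : 1 + n%:R * d <= r^-1 ^+ n.
  have -> : r^-1 = 1 + d by rewrite /d addrC subrK.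
  elim: n => [|n IHn]; first by rewrite mul0r addr0 expr0.
  have nd_ge0 : 0 <= n%:R * d by rewrite mulr_ge0 ?ler0n ?ltW.
  rewrite exprS; apply: le_trans (ler_wpM2l _ IHn); last by rewrite addr_ge0 ?ltW.
  by rewrite -natr1; nra.
have [N ltN] : exists N : nat, (e * d)^-1 < N%:R.
  by exists (Num.bound (e * d)^-1); rewrite archi_boundP // invr_ge0 mulr_ge0 ?ltW.
exists N.
have : e^-1 < r^-1 ^+ N.
  apply: lt_le_trans (bernoulli N).
  suff : e^-1 < N%:R * d by lra.
  by rewrite -ltr_pdivrMr // -invfM.
by rewrite exprVn ltf_pV2 // posrE exprn_gt0.
Qed.

Lemma normc_real (R : rcfType) (x : R) : `|x%:C%C| = (`|x|)%:C%C.
Proof. by rewrite normc_def /= expr0n /= addr0 sqrtr_sqr. Qed.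

Lemma lt_eps_scale (R : realFieldType) (c e : R) :
  0 <= c -> 0 < e -> c * (e / (c + 1)) < e.
Proof. by move=> c_ge0 e_gt0; rewrite mulrA ltr_pdivrMr; nra. Qed.

Section CStarAlgebra.
Variables (R : realType) (A : unitAlgType R[i]) (star : A -> A) (nrm : A -> R).
Hypothesis starK : forall a, star (star a) = a.
Hypothesis starD : forall a b, star (a + b) = star a + star b.
Hypothesis starZ : forall (c : R[i]) a, star (c *: a) = Num.conj c *: star a.
Hypothesis starM : forall a b, star (a * b) = star b * star a.
Hypothesis nrm_ge0 : forall a, 0 <= nrm a.
Hypothesis nrm_eq0 : forall a, nrm a = 0 -> a = 0.
Hypothesis nrmD : forall a b, nrm (a + b) <= nrm a + nrm b.
Hypothesis nrmZ : forall (c : R[i]) a, (nrm (c *: a))%:C%C = `|c| * (nrm a)%:C%C.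
Hypothesis nrmM : forall a b, nrm (a * b) <= nrm a * nrm b.
Hypothesis nrm_star_mul : forall a, nrm (star a * a) = nrm a ^+ 2.

Definition nrm_cvg (u : nat -> A) (l : A) : Prop :=
  forall e : R, 0 < e -> exists N : nat, forall n : nat,
    (N <= n)%N -> nrm (u n - l) < e.

Definition nrm_cauchy (u : nat -> A) : Prop :=
  forall e : R, 0 < e -> exists N : nat, forall m n : nat,
    (N <= m)%N -> (N <= n)%N -> nrm (u m - u n) < e.

Hypothesis nrm_complete : forall u, nrm_cauchy u -> exists l, nrm_cvg u l.

Lemma star0 : star 0 = 0.
Proof. by apply: (addrI (star 0)); rewrite -starD !addr0. Qed.

Lemma starN a : star (- a) = - star a.
Proof. by apply: (addrI (star a)); rewrite -starD !subrr star0. Qed.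

Lemma star1 : star 1 = 1.
Proof. by have := starM (star 1) 1; rewrite !(mulr1, starK). Qed.

Lemma star_sum (I : Type) (r : seq I) (F : I -> A) :
  star (\sum_(i <- r) F i) = \sum_(i <- r) star (F i).
Proof. exact: (big_morph star starD star0). Qed.

Lemma nrmZr (r : R) a : nrm (r%:C%C *: a) = `|r| * nrm a.
Proof. by apply: complexI; rewrite nrmZ normc_real rmorphM. Qed.

Lemma nrm0 : nrm 0 = 0.
Proof. by have := nrmZr 0 0; rewrite scale0r normr0 mul0r. Qed.

Lemma nrmN a : nrm (- a) = nrm a.
Proof. by have := nrmZr (-1) a; rewrite rmorphN1 scaleN1r normrN normr1 mul1r. Qed.

Lemma nrmBC a b : nrm (a - b) = nrm (b - a).
Proof. by rewrite -nrmN opprB. Qed.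

Lemma nrm_sum (I : Type) (r : seq I) (P : pred I) (F : I -> A) :
  nrm (\sum_(i <- r | P i) F i) <= \sum_(i <- r | P i) nrm (F i).
Proof.
elim/big_rec2: _ => [|i y1 y2 _ IH]; first by rewrite nrm0.
by apply: le_trans (nrmD _ _) _; rewrite lerD2l.
Qed.

Lemma nrm_eps_eq0 a : (forall e : R, 0 < e -> nrm a < e) -> a = 0.
Proof.
move=> small; apply: nrm_eq0; apply/eqP; rewrite eq_le nrm_ge0 andbT.
by rewrite leNgt; apply/negP => /small; rewrite ltxx.
Qed.

Lemma is_projection_subr1 p : is_projection star p -> is_projection star (1 - p).
Proof.
case=> pp sp; split; last by rewrite starD starN star1 sp.
by rewrite mulrBr mulr1 mulrBl mul1r pp subrr subr0.
Qed.

Lemma nrm_projection p : is_projection star p -> nrm p <= 1.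
Proof.
case=> pp sp; have := nrm_star_mul p; rewrite sp pp => nrm_sqr.
have [->|nrm_neq0] := eqVneq (nrm p) 0; first by [].
have : nrm p * (nrm p - 1) = 0 by rewrite mulrBr mulr1 -expr2 -nrm_sqr subrr.
by move/eqP; rewrite mulf_eq0 (negbTE nrm_neq0) subr_eq0 => /eqP ->.
Qed.

Lemma nrm1 : nrm 1 <= 1.
Proof. by apply: nrm_projection; rewrite /is_projection star1 mulr1. Qed.

Lemma nrmX a n : nrm (a ^+ n) <= nrm a ^+ n.
Proof.
elim: n => [|n IHn]; first by rewrite !expr0 nrm1.
by rewrite !exprS; apply: le_trans (nrmM _ _) _; apply: ler_wpM2l.
Qed.

Lemma eq_nrm_cvg u v l : (forall n, u n = v n) -> nrm_cvg u l -> nrm_cvg v l.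
Proof.
by move=> eq_uv cvg_u e /cvg_u[N HN]; exists N => n /HN; rewrite eq_uv.
Qed.

Lemma nrm_cvg_unique u l l' : nrm_cvg u l -> nrm_cvg u l' -> l = l'.
Proof.
move=> cvg_l cvg_l'; apply/eqP; rewrite -subr_eq0; apply/eqP.
apply: nrm_eps_eq0 => e e_gt0.
have [N HN] := cvg_l (e / 2) ltac:(lra).
have [N' HN'] := cvg_l' (e / 2) ltac:(lra).
have := HN' (maxn N N') (leq_maxr _ _); have := HN (maxn N N') (leq_maxl _ _).
rewrite nrmBC; set v := u _ => lt_l lt_l'.
have -> : l - l' = (l - v) + (v - l') by rewrite addrA subrK.
by apply: le_lt_trans (nrmD _ _) _; lra.
Qed.

Lemma nrm_cvgMl a u l : nrm_cvg u l -> nrm_cvg (fun n => a * u n) (a * l).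
Proof.
move=> cvg_u e e_gt0.
have [N HN] := cvg_u (e / (nrm a + 1)) ltac:(apply: divr_gt0; have := nrm_ge0 a; lra).
exists N => n /HN lt_n; rewrite -mulrBr; apply: le_lt_trans (nrmM _ _) _.
exact: le_lt_trans (ler_wpM2l (nrm_ge0 a) (ltW lt_n)) (lt_eps_scale (nrm_ge0 a) e_gt0).
Qed.

Lemma nrm_cvgMr a u l : nrm_cvg u l -> nrm_cvg (fun n => u n * a) (l * a).
Proof.
move=> cvg_u e e_gt0.
have [N HN] := cvg_u (e / (nrm a + 1)) ltac:(apply: divr_gt0; have := nrm_ge0 a; lra).
exists N => n /HN lt_n; rewrite -mulrBl; apply: le_lt_trans (nrmM _ _) _.
rewrite mulrC.
exact: le_lt_trans (ler_wpM2l (nrm_ge0 a) (ltW lt_n)) (lt_eps_scale (nrm_ge0 a) e_gt0).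
Qed.

Section NeumannSeries.
Variable x : A.
Hypothesis nrm_x_lt1 : nrm x < 1.

Let r := nrm x.
Let r_ge0 : 0 <= r. Proof. exact: nrm_ge0. Qed.

Lemma nrm_cvg_subr1_expr : nrm_cvg (fun n => 1 - x ^+ n) 1.
Proof.
move=> e e_gt0; have [N ltN] := exprn_lt r_ge0 nrm_x_lt1 e_gt0.
exists N => n le_Nn; rewrite addrAC subrr add0r nrmN.
apply: le_lt_trans (nrmX _ _) (le_lt_trans _ ltN).
by apply: ler_wiXn2l => //; apply: ltW.
Qed.

Lemma nrm_geometric_tail n m : (n <= m)%N ->
  nrm (\sum_(n <= k < m) x ^+ k) <= r ^+ n / (1 - r).
Proof.
move=> le_nm; apply: le_trans (nrm_sum _ _ _) _.
apply: le_trans (ler_sum _ (fun k _ => nrmX x k)) _.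
rewrite ler_pdivlMr ?subr_gt0 // mulr_suml.
under eq_bigr do rewrite mulrBr mulr1 -exprSr -opprB.
rewrite sumrN telescope_sumr // opprB.
by have := exprn_ge0 m r_ge0; lra.
Qed.

Lemma geometric_series_cauchy : nrm_cauchy (fun n => \sum_(k < n) x ^+ k).
Proof.
move=> e e_gt0.
have r1_gt0 : 0 < 1 - r by rewrite subr_gt0.
have [N ltN] := exprn_lt r_ge0 nrm_x_lt1 (mulr_gt0 e_gt0 r1_gt0).
have tail_lt n m : (N <= n)%N -> (n <= m)%N ->
    nrm (\sum_(k < m) x ^+ k - \sum_(k < n) x ^+ k) < e.
  move=> le_Nn le_nm.
  rewrite -!(big_mkord xpredT) (big_cat_nat (leq0n n) le_nm) /= addrC addrK.
  apply: le_lt_trans (nrm_geometric_tail le_nm) _.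
  rewrite ltr_pdivrMr //; apply: le_lt_trans ltN.
  by apply: ler_wiXn2l => //; apply: ltW.
exists N => m n le_Nm le_Nn.
have [le_nm|lt_mn] := leqP n m; first exact: tail_lt.
by rewrite nrmBC; apply: tail_lt => //; apply: ltnW.
Qed.

Lemma neumann_unit : (1 - x) \is a GRing.unit.
Proof.
have [l cvg_l] := nrm_complete geometric_series_cauchy.
have mul_sumE n : (1 - x) * \sum_(k < n) x ^+ k = 1 - x ^+ n.
  by rewrite -opprB mulNr -subrX1 opprB.
have comm_sum n : GRing.comm (1 - x) (\sum_(k < n) x ^+ k).
  apply: commr_sum => k _; apply: commrX.
  exact/commr_sym/commrB/commr_refl/commr1.
have mulVl : (1 - x) * l = 1.
  apply: nrm_cvg_unique (nrm_cvgMl (1 - x) cvg_l) _.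
  by apply: eq_nrm_cvg nrm_cvg_subr1_expr => n; rewrite mul_sumE.
have mulVr : l * (1 - x) = 1.
  apply: nrm_cvg_unique (nrm_cvgMr (1 - x) cvg_l) _.
  by apply: eq_nrm_cvg nrm_cvg_subr1_expr => n; rewrite -comm_sum mul_sumE.
by apply/unitrP; exists l.
Qed.

End NeumannSeries.

Lemma unit_subr_scalar a (c : R[i]) :
  (nrm a)%:C%C < `|c| -> (a - c%:A) \is a GRing.unit.
Proof.
move=> lt_ac.
have c_neq0 : c != 0.
  by rewrite -normr_eq0 gt_eqF //; apply: le_lt_trans lt_ac; rewrite ler0c.
have -> : a - c%:A = - (c%:A * (1 - c^-1 *: a)).
  by rewrite mulrBr mulr1 mulr_algl scalerA divff // scale1r opprB.
rewrite unitrN unitrMl.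
  apply/unitrP; exists c^-1%:A; rewrite !mulr_algl !scalerA.
  by rewrite mulVf // divff // scale1r.
apply: neumann_unit; rewrite -ltcR nrmZ normfV rmorph1 mulrC.
by rewrite ltr_pdivrMr ?mul1r // normr_gt0.
Qed.

(* For [l = x + i y] with [y != 0], choose [t] with [2 y t = ||h||^2 + 1]:
   then [||h + i t||^2 = ||h^2 + t^2|| < x^2 + (y + t)^2 = |l + i t|^2], so
   [h - l = (h + i t) - (l + i t)] is invertible. *)
Lemma spectrum_self_adjoint_real h l :
  star h = h -> l \in spectrum h -> l \is Num.real.
Proof.
move=> sh; apply: contraLR; rewrite unfold_in /spectrum negbK.
case: l => x y; rewrite complex_real => y_neq0.
set t := (nrm h ^+ 2 + 1) / (2 * y).
set it : R[i] := (0 +i* t)%C.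
have -> : h - (x +i* y)%C%:A = (h + it%:A) - ((x +i* y)%C + it)%:A.
  by rewrite scalerDl opprD addrACA subrr addr0.
apply: unit_subr_scalar.
have star_hit : star (h + it%:A) * (h + it%:A) = h * h + (t ^+ 2)%:C%C%:A.
  have conj_it : Num.conj it = - it by apply/eqP; rewrite eq_complex /= oppr0 !eqxx.
  have sqr_it : it * it = - (t ^+ 2)%:C%C.
    by apply/eqP; rewrite eq_complex /=; apply/andP; split; apply/eqP; ring.
  rewrite starD sh starZ star1 conj_it scaleNr mulrDr !mulrDl.
  rewrite mulr_algr !mulNr !mulr_algl scalerA sqr_it scaleNr opprK.
  by rewrite addrA subrK.
have nrm_hit : nrm (h + it%:A) ^+ 2 <= nrm h ^+ 2 + t ^+ 2.
  rewrite -nrm_star_mul star_hit; apply: le_trans (nrmD _ _) _.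
  apply: lerD; first by rewrite expr2; apply: nrmM.
  rewrite nrmZr ger0_norm ?sqr_ge0 // -[leRHS]mulr1.
  by apply: ler_wpM2l; rewrite ?sqr_ge0 ?nrm1.
have yt : 2 * y * t = nrm h ^+ 2 + 1 by rewrite /t; field.
rewrite normc_def ltcR /= addr0 -[nrm _]ger0_norm // -sqrtr_sqr ltr_sqrt;
  by have := sqr_ge0 x; have := sqr_ge0 y; have := sqr_ge0 (nrm h); nra.
Qed.

Lemma cstar_pos_of_nrm_le h (n : nat) :
  star h = h -> nrm (n%:R - h) <= n%:R -> cstar_pos star h.
Proof.
move=> sh nrm_le; split=> // l l_spec.
have l_real := spectrum_self_adjoint_real sh l_spec; rewrite l_real /=.
rewrite real_leNgt ?real0 //; apply/negP => l_lt0.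
move: l_spec; rewrite unfold_in /spectrum => /negP; apply.
have -> : h - l%:A = - ((n%:R - h) - (n%:R - l)%:A).
  by rewrite scalerBl scaler_nat opprB opprB [RHS]addrC addrA subrK.
rewrite unitrN; apply: unit_subr_scalar.
rewrite ger0_norm; last by rewrite subr_ge0 (le_trans (ltW l_lt0)) ?ler0n.
apply: (@le_lt_trans _ _ n%:R); first by rewrite -(rmorph_nat (real_complex R)) lecR.
by rewrite ltrDl oppr_gt0.
Qed.

Lemma cstar_pos_sum_projections (I : finType) (F : I -> A) :
  (forall i, is_projection star (F i)) -> cstar_pos star (\sum_i F i).
Proof.
move=> projF; apply: (@cstar_pos_of_nrm_le _ #|I|).
  by rewrite star_sum; apply: eq_bigr => i _; case: (projF i).
rewrite -[X in nrm (X - _)]sumr_const -sumrB -[leRHS]sumr_const.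
apply: le_trans (nrm_sum _ _ _) (ler_sum _ _) => i _.
exact/nrm_projection/is_projection_subr1.
Qed.

End CStarAlgebra.

Lemma magic_corner_sums (V : pzRingType) (M K : nat) (Q : 'M[V]_(M + K)) :
    (forall i, \sum_j Q i j = 1) -> (forall j, \sum_i Q i j = 1) ->
  \sum_(i < M) \sum_(j < M) Q (lshift K i) (lshift K j)
    = (M%:R - K%:R) + \sum_(i < K) \sum_(j < K) Q (rshift M i) (rshift M j).
Proof.
move=> row1 col1.
set S := \sum_(i < M) _; set D := \sum_(i < K) \sum_(j < K) _.
set C := \sum_(i < K) \sum_(j < M) Q (rshift M i) (lshift K j).
have cols : S + C = M%:R.
  have -> : M%:R = \sum_(j < M) (1 : V) by rewrite sumr_const card_ord.
  rewrite /S /C exchange_big [X in _ + X]exchange_big -big_split /=.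
  by apply: eq_bigr => j _; rewrite -(col1 (lshift K j)) big_split_ord.
have rows : C + D = K%:R.
  have -> : K%:R = \sum_(i < K) (1 : V) by rewrite sumr_const card_ord.
  rewrite /C /D -big_split; apply: eq_bigr => i _.
  by rewrite -(row1 (rshift M i)) big_split_ord.
by rewrite -cols -rows opprD addrA addrK subrK.
Qed.

Theorem proposition3p3 (R : realType) (A : unitAlgType R[i])
    (star : A -> A) (nrm : A -> R) (HA : unital_cstar_algebra star nrm)
    (M K : nat) (P : 'M[A]_M) (HP : submagic star P)
    (Pt : 'M[A]_(M + K)) (HPt : magic star Pt)
    (Hblock : forall i j : 'I_M, Pt (lshift K i) (lshift K j) = P i j) :
  cstar_le star ((M%:R - K%:R) * 1) (\sum_(i < M) \sum_(j < M) P i j).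
Proof.
case: HA => [[starK starD starZ starM] [nrm_ge0 nrm_eq0 nrmD nrmZ nrmM] nrmC complete].
have pos_sum := cstar_pos_sum_projections starK starD starZ starM
  nrm_ge0 nrm_eq0 nrmD nrmZ nrmM nrmC complete.
case: HPt => [[projPt _ _] row1 col1]; case: HP => [projP _ _].
set S := \sum_(i < M) _; set D := \sum_(i < K) \sum_(j < K) Pt (rshift M i) (rshift M j).
have S_pos : cstar_pos star S by rewrite /S pair_bigA; apply: pos_sum => -[i j].
have D_pos : cstar_pos star D by rewrite /D pair_bigA; apply: pos_sum => -[i j].
have S_eq : S = (M%:R - K%:R) + D.
  rewrite -(magic_corner_sums row1 col1).
  by apply: eq_bigr => i _; apply: eq_bigr => j _; rewrite Hblock.
have -> : (M%:R - K%:R) * 1 = S - D by rewrite S_eq addrK mulr1.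
split; [|exact: S_pos.1|by rewrite subKr].
by rewrite starD (starN starD) S_pos.1 D_pos.1.
Qed.
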